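(* Let $\mathcal{H}$ be a real Hilbert space, $\rho\in\mathbb{R}$, and let $\mathcal{A}:\mathcal{H}\to 2^{\mathcal{H}}$ be a maximally $\rho$-comonotone operator. Let $\eta>\max\{-2\rho,0\}$ and let $x:\mathbb{R}\supseteq I\to\mathcal{H}$ be a differentiable function (such that $t\mapsto \mathcal{A}_\eta(x(t))$ is differentiable). Then $$\Big\langle \dot{x}(t), \frac{d}{dt}\mathcal{A}_{\eta}(x(t))\Big\rangle \geq 0 .$$
   Context: An operator $\mathcal{A}:\mathcal{H}\to 2^{\mathcal{H}}$ is $\rho$-comonotone if $\langle x-y,u-v\rangle\ge \rho\|u-v\|^2$ for all $(x,u),(y,v)$ in the graph $\mathrm{gra}\,\mathcal{A}=\{(x,u): u\in\mathcal{A}x\}$; it is maximally $\rho$-comonotone if it is $\rho$-comonotone and no other $\rho$-comonotone operator has a graph properly containing $\mathrm{gra}\,\mathcal{A}$. The resolvent of $\mathcal{A}$ with index $\eta>0$ is $J^{\mathcal{A}}_\eta=(\mathrm{Id}+\eta\mathcal{A})^{-1}$ and the Yosida regularization is $\mathcal{A}_\eta=\frac{1}{\eta}(\mathrm{Id}-J^{\mathcal{A}}_\eta)$. For $\mathcal{A}$ maximally $\rho$-comonotone and $\eta>\max\{-2\rho,0\}$, $J^{\mathcal{A}}_\eta$ and $\mathcal{A}_\eta$ are single-valued everywhere-defined operators $\mathcal{H}\to\mathcal{H}$. *)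

From HB Require Import structures.
From mathcomp Require Import all_boot all_order all_algebra.
From mathcomp Require Import all_classical all_reals all_analysis.
Set Implicit Arguments. Unset Strict Implicit. Unset Printing Implicit Defensive.
Import Order.TTheory GRing.Theory Num.Theory.
Import numFieldNormedType.Exports.
Local Open Scope classical_set_scope.
Local Open Scope ring_scope.

(* A real Hilbert space is represented by a complete normed R-module V together
   with an inner product inducing its norm. *)
Definition is_inner_product (R : realType) (V : normedModType R)
  (inner : V -> V -> R) : Prop :=
  [/\ (forall x y, inner x y = inner y x),
      (forall a x y z, inner (a *: x + y) z = a * inner x z + inner y z)
    & (forall x, inner x x = `|x| ^+ 2)].

(* Set-valued operators A : V -> 2^V are modelled as V -> set V;
   u \in A x is written A x u. *)
Definition comonotone (R : realType) (V : normedModType R)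
  (inner : V -> V -> R) (rho : R) (A : V -> set V) : Prop :=
  forall x y u v, A x u -> A y v -> inner (x - y) (u - v) >= rho * `|u - v| ^+ 2.

Definition maximally_comonotone (R : realType) (V : normedModType R)
  (inner : V -> V -> R) (rho : R) (A : V -> set V) : Prop :=
  comonotone inner rho A /\
  forall B : V -> set V, comonotone inner rho B ->
    (forall x u, A x u -> B x u) -> forall x u, B x u -> A x u.

(* Resolvent J_eta = (Id + eta A)^{-1} as a relation: p is a value of J_eta x
   iff x \in p + eta A p. *)
Definition resolvent_rel (R : realType) (V : normedModType R)
  (A : V -> set V) (eta : R) (x p : V) : Prop :=
  exists u, A p u /\ x = p + eta *: u.

Definition yosida_rel (R : realType) (V : normedModType R)
  (A : V -> set V) (eta : R) (x w : V) : Prop :=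
  exists p, resolvent_rel A eta x p /\ w = eta^-1 *: (x - p).

(* If w = A_eta x then w is a value of A at the resolvent point x - eta w, so
   comonotonicity of A yields <x - x', w - w'> >= (rho + eta) |w - w'|^2, which
   is nonnegative as eta > -2 rho forces rho + eta > 0. Along the curve this
   gives <x(s) - x(t), y(s) - y(t)> >= 0; dividing by (s - t)^2 and letting s
   tend to t, continuity of the inner product gives the claim. *)
From HB Require Import structures.
From mathcomp Require Import all_boot all_order all_algebra.
From mathcomp Require Import all_classical all_reals all_analysis.
From mathcomp Require Import lra.
Import Order.TTheory GRing.Theory Num.Theory.
Import numFieldNormedType.Exports.
Local Open Scope classical_set_scope.
Local Open Scope ring_scope.

Section InnerProduct.
Context {R : realType} {V : normedModType R} {inner : V -> V -> R}.
Hypothesis inner_prod : is_inner_product inner.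

Lemma inner_addl a b z : inner (a + b) z = inner a z + inner b z.
Proof. by case: inner_prod => _ hl _; rewrite -[a]scale1r hl mul1r scale1r. Qed.

Lemma inner0l z : inner 0 z = 0.
Proof. by apply: (addrI (inner 0 z)); rewrite -inner_addl !addr0. Qed.

Lemma inner_scalel k a z : inner (k *: a) z = k * inner a z.
Proof.
by case: inner_prod => _ hl _; rewrite -[k *: a]addr0 hl inner0l addr0.
Qed.

Lemma inner_scaler k a z : inner z (k *: a) = k * inner z a.
Proof. by case: inner_prod => hs _ _; rewrite hs inner_scalel hs. Qed.

Lemma inner_polar a b : inner a b = (`|a + b| ^+ 2 - `|a - b| ^+ 2) / 4.
Proof.
have [hs _ hn] := inner_prod.
have inner_addr u v w : inner u (v + w) = inner u v + inner u w.
  by rewrite hs inner_addl (hs v) (hs w).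
have inner_oppl u w : inner (- u) w = - inner u w.
  by rewrite -scaleN1r inner_scalel mulN1r.
have inner_oppr u w : inner w (- u) = - inner w u.
  by rewrite hs inner_oppl hs.
rewrite -!hn !inner_addl !inner_addr !inner_oppl !inner_oppr (hs b a).
move: (inner a a) (inner a b) (inner b b) => p q r; lra.
Qed.

Lemma cvg_inner {T : Type} {F : set_system T} {FF : Filter F}
    {f g : T -> V} {a b : V} :
  f @ F --> a -> g @ F --> b -> (fun s => inner (f s) (g s)) @ F --> inner a b.
Proof.
move=> fa gb; under eq_fun do rewrite inner_polar !expr2.
rewrite inner_polar !expr2.
apply: cvgM; last exact: cvg_cst.
by apply: cvgB; apply: cvgM; apply: cvg_norm;
  [apply: cvgD | apply: cvgD | apply: cvgB | apply: cvgB].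
Qed.

Lemma derive1_cvg (f : R -> V) t :
  derivable f t 1 -> (fun h => h^-1 *: (f (h + t) - f t)) @ 0^' --> derive1 f t.
Proof.
have -> : (fun h => h^-1 *: (f (h + t) - f t)) =
          (fun h => h^-1 *: ((f \o shift t) (h *: 1) - f t)).
  by apply/funext => h; rewrite /= [h%:A]mulr1.
by rewrite derive1E.
Qed.

Lemma inner_derive1_ge0 {f g : R -> V} {t : R} :
  derivable f t 1 -> derivable g t 1 ->
  (\forall s \near t, 0 <= inner (f s - f t) (g s - g t)) ->
  0 <= inner (derive1 f t) (derive1 g t).
Proof.
move=> /derive1_cvg df /derive1_cvg dg near_t.
apply: (cvgr_to_ge (cvg_inner df dg)).
have {}near_t : \forall h \near 0^', 0 <= inner (f (h + t) - f t) (g (h + t) - g t).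
  by apply: nbhs_dnbhs; move/nbhs0P: near_t; apply: filterS => h; rewrite (addrC t).
apply: filterS near_t => h ge0.
by rewrite inner_scalel inner_scaler mulrA -expr2 mulr_ge0 ?sqr_ge0.
Qed.

End InnerProduct.

Lemma yosida_relE {R : realType} {V : normedModType R} {A : V -> set V}
    {eta : R} {x w : V} :
  eta != 0 -> yosida_rel A eta x w <-> A (x - eta *: w) w.
Proof.
move=> eta0.
have scaleKV v : eta^-1 *: (eta *: v) = v by rewrite scalerA mulVf ?scale1r.
split.
  move=> [p [[u [Apu ->]] ->]].
  by rewrite [p + _ - p]addrC addKr scaleKV addrK.
move=> Aw; exists (x - eta *: w); split; first by exists w; rewrite subrK.
by rewrite opprB addrC subrK scaleKV.
Qed.

Lemma yosida_comonotone {R : realType} {V : normedModType R}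
    {inner : V -> V -> R} {rho : R} {A : V -> set V} {eta : R} :
  is_inner_product inner -> eta != 0 -> comonotone inner rho A ->
  comonotone inner (rho + eta) (yosida_rel A eta).
Proof.
move=> inner_prod eta0 A_co x x' w w' /(yosida_relE eta0) Aw
  /(yosida_relE eta0) Aw'.
have -> : x - x' = (x - eta *: w - (x' - eta *: w')) + eta *: (w - w').
  by rewrite scalerBr opprB addrAC !subrKA.
have [_ _ hn] := inner_prod.
rewrite (inner_addl inner_prod) (inner_scalel inner_prod) hn mulrDl lerD2r.
exact: A_co.
Qed.

Theorem mainTheorem1 (R : realType) (V : completeNormedModType R)
  (inner : V -> V -> R) (rho : R) (A : V -> set V) (eta : R)
  (I : set R) (x y : R -> V) :
  is_inner_product inner ->
  maximally_comonotone inner rho A ->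
  Num.max (- (2 * rho)) 0 < eta ->
  open I ->
  (forall s, I s -> yosida_rel A eta (x s) (y s)) ->
  (forall s, I s -> derivable x s 1) ->
  (forall s, I s -> derivable y s 1) ->
  forall t, I t -> 0 <= inner (derive1 x t) (derive1 y t).
Proof.
move=> inner_prod [A_co _] eta_gt oI yosida_xy dx dy t It.
have [eta_gt_rho eta_gt0] : - (2 * rho) < eta /\ 0 < eta.
  by move: eta_gt; rewrite gt_max => /andP[].
have rho_eta_ge0 : 0 <= rho + eta by lra.
have Ay_co := yosida_comonotone inner_prod (lt0r_neq0 eta_gt0) A_co.
apply: (inner_derive1_ge0 inner_prod (dx t It) (dy t It)).
have : \forall s \near t, I s by apply: open_nbhs_nbhs; split.
apply: filterS => s Is.
apply: le_trans (Ay_co _ _ _ _ (yosida_xy s Is) (yosida_xy t It)).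
by rewrite mulr_ge0 ?sqr_ge0.
Qed.
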